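(* Let $\nu$ be a Krull valuation on $\mathbb{K}[x]$, $\mu$ an extension of $\nu$ to $\overline{\mathbb{K}}[x]$, $f\in\mathbb{K}[x]$ non-constant and $a\in\overline{\mathbb{K}}$ an optimizing root of $f$. Then $\nu(f)\in\mu\overline{\mathbb{K}}$ if and only if $\delta(f)\in\mu\overline{\mathbb{K}}$.
   Context: $\overline{\mathbb{K}}$ is an algebraic closure of $\mathbb{K}$, $\mu\overline{\mathbb{K}}$ the value group of $\mu$ restricted to $\overline{\mathbb{K}}$. For non-constant $f$, $\delta(f)=\max\{\mu(x-c):c\in\overline{\mathbb{K}},f(c)=0\}$, and a root $c$ with $\mu(x-c)=\delta(f)$ is an optimizing root. *)

From HB Require Import structures.
From mathcomp Require Import all_boot all_order all_algebra.
Set Implicit Arguments. Unset Strict Implicit. Unset Printing Implicit Defensive.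
Import Order.TTheory GRing.Theory Num.Theory.
Local Open Scope ring_scope.

Record ordered_group (G : zmodType) := OrderedGroup {
  ogle : rel G;
  ogle_refl : forall x, ogle x x;
  ogle_anti : forall x y, ogle x y -> ogle y x -> x = y;
  ogle_trans : forall x y z, ogle x y -> ogle y z -> ogle x z;
  ogle_total : forall x y, ogle x y || ogle y x;
  ogle_add : forall x y z, ogle x y -> ogle (x + z) (y + z)
}.

(* Gamma_oo = Gamma \cup {oo}, with None playing the role of oo. *)
Definition ext_le (G : zmodType) (O : ordered_group G) (a b : option G) : Prop :=
  match a, b with
  | _, None => True
  | None, Some _ => False
  | Some x, Some y => ogle O x y
  end.

Definition ext_add (G : zmodType) (a b : option G) : option G :=
  match a, b with
  | Some x, Some y => Some (x + y)
  | _, _ => None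
  end.

Definition krull_valuation (A : comNzRingType) (G : zmodType) (O : ordered_group G)
    (v : A -> option G) : Prop :=
  [/\ v 0 = None, v 1 = Some 0,
      forall a b, v (a * b) = ext_add (v a) (v b)
    & forall a b, ext_le O (match v a, v b with
                            | Some x, Some y => Some (if ogle O x y then x else y)
                            | None, w => w
                            | w, None => w
                            end) (v (a + b))].

(* Membership in mu(Kbar) = { mu(c) : c in Kbar, c <> 0 }, the value group of
   mu restricted to Kbar (constants of Kbar[x]). *)
Definition in_value_group (L : fieldType) (G : zmodType)
    (mu : {poly L} -> option G) (g : option G) : Prop :=
  exists c : L, c != 0 /\ mu c%:P = g.

Definition is_delta (K : fieldType) (L : fieldType) (iota : {rmorphism K -> L})
    (G : zmodType) (O : ordered_group G) (mu : {poly L} -> option G)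
    (f : {poly K}) (d : option G) : Prop :=
  (exists c : L, root (map_poly iota f) c /\ mu ('X - c%:P) = d) /\
  (forall c : L, root (map_poly iota f) c -> ext_le O (mu ('X - c%:P)) d).

Definition optimizing_root (K : fieldType) (L : fieldType) (iota : {rmorphism K -> L})
    (G : zmodType) (O : ordered_group G) (mu : {poly L} -> option G)
    (f : {poly K}) (a : L) : Prop :=
  root (map_poly iota f) a /\
  (forall c : L, root (map_poly iota f) c -> ext_le O (mu ('X - c%:P)) (mu ('X - a%:P))).

From HB Require Import structures.
From mathcomp Require Import all_boot all_order all_algebra ring.
Import GRing.Theory.
Set Implicit Arguments. Unset Strict Implicit.
Local Open Scope ring_scope.

(* Write g for f viewed in Kbar[x], so nu(f) = mu(g), and factor
   g = lc(g) * prod_c (x - c) over its roots in the algebraically closed Kbar.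
   Every root c satisfies mu(x - c) <= mu(x - a) = delta; when the inequality
   is strict, the strict ultrametric inequality gives
   mu(x - c) = mu((x - c) - (x - a)) = mu(a - c), a value of a constant.
   Hence mu(g) = k * delta + w with k >= 1 (the factor x - a occurs) and
   w in Gamma.  As Gamma is a group, mu(g) is in Gamma iff k * delta is, and
   as Gamma is divisible (Kbar is algebraically closed) inside a torsion-free
   group, this holds iff delta is in Gamma.  If delta is infinite, so is
   mu(g), and neither lies in Gamma. *)

Section OrderedGroup.
Variables (G : zmodType) (O : ordered_group G).

Lemma ogle_addl (x y z : G) : ogle O x y -> ogle O (z + x) (z + y).
Proof. by move=> h; rewrite ![z + _]addrC; apply: ogle_add. Qed.

Lemma ogle_mulrn_ge0 (m : G) (k : nat) : ogle O 0 m -> ogle O 0 (m *+ k).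
Proof.
move=> h0; elim: k => [|k IH]; first by rewrite mulr0n ogle_refl.
rewrite mulrS; apply: ogle_trans IH _.
by have := ogle_add (m *+ k) h0; rewrite add0r addrC.
Qed.

Lemma ordered_group_torsion_free (m : G) (k : nat) :
  (0 < k)%N -> m *+ k = 0 -> m = 0.
Proof.
have pos_case (n : G) : ogle O 0 n -> n *+ k = 0 -> (0 < k)%N -> n = 0.
  move=> h0 hk; case: k hk => // k hk _; apply/esym/(ogle_anti h0).
  by have := ogle_addl n (ogle_mulrn_ge0 k h0); rewrite addr0 -mulrS hk.
move=> k_gt0 hm; case/orP: (ogle_total O 0 m) => h0; first exact: pos_case.
have hN : ogle O 0 (- m) by have := ogle_add (- m) h0; rewrite subrr add0r.
by apply/eqP; rewrite -oppr_eq0 (pos_case _ hN) // mulNrn hm oppr0.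
Qed.

Lemma mulrn_inj (m n : G) (k : nat) : (0 < k)%N -> m *+ k = n *+ k -> m = n.
Proof.
move=> k_gt0 h; apply/eqP; rewrite -subr_eq0; apply/eqP.
by apply: (ordered_group_torsion_free k_gt0); rewrite mulrnBl h subrr.
Qed.

Lemma ext_le_anti (a b : option G) : ext_le O a b -> ext_le O b a -> a = b.
Proof. by case: a b => [x|] [y|] //= h1 h2; rewrite (ogle_anti h1 h2). Qed.

End OrderedGroup.

Section KrullValuation.
Variables (A : comNzRingType) (G : zmodType) (O : ordered_group G).
Variables (v : A -> option G) (hv : krull_valuation O v).

Lemma val1 : v 1 = Some 0. Proof. by case: hv. Qed.

Lemma valM (p q : A) : v (p * q) = ext_add (v p) (v q).
Proof. by case: hv. Qed.

Lemma valX (p : A) (m : G) (k : nat) : v p = Some m -> v (p ^+ k) = Some (m *+ k).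
Proof.
move=> hp; elim: k => [|k IH]; first by rewrite expr0 mulr0n val1.
by rewrite exprS valM hp IH /= mulrS.
Qed.

Lemma val_inverse_pair (p q : A) :
  p * q = 1 -> exists z, v p = Some z /\ v q = Some (- z).
Proof.
move=> hpq; have := val1; rewrite -hpq valM.
case: (v p) (v q) => [z|] [w|] //= [hzw]; exists z; split => //.
by congr Some; apply/eqP; rewrite -addr_eq0 addrC hzw.
Qed.

(* v(-1) is a torsion element, hence 0, so negation preserves values. *)
Lemma valN (p : A) : v (- p) = v p.
Proof.
have vN1 : v (-1) = Some 0.
  have : v ((-1) * (-1)) = Some 0 by rewrite mulrNN mulr1 val1.
  rewrite valM; case: (v (-1)) => [z|] //= [hz]; congr Some.
  by apply: (@ordered_group_torsion_free _ O z 2); rewrite ?mulr2n.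
by rewrite -mulN1r valM vN1; case: (v p) => //= x; rewrite add0r.
Qed.

Lemma val_add_ge (x : G) (p q : A) :
  ext_le O (Some x) (v p) -> ext_le O (Some x) (v q) -> ext_le O (Some x) (v (p + q)).
Proof.
case: hv => _ _ _ /(_ p q).
case: (v p) (v q) => [y|] [z|] //=; case: (v (p + q)) => [w|] //= hmin hxy hxz.
all: try case: ifP hmin => _ hmin.
all: first [exact: ogle_trans hxy hmin | exact: ogle_trans hxz hmin].
Qed.

Lemma val_sub_lt (p q : A) (y d : G) :
  v p = Some y -> v q = Some d -> ogle O y d -> y <> d -> v (p - q) = Some y.
Proof.
move=> vp vq hyd hne.
have vpq : v (q + (p - q)) = Some y by rewrite addrC subrK.
have sum_le_y x : ext_le O (Some x) (v q) -> ext_le O (Some x) (v (p - q)) -> ogle O x y.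
  by move=> hq hr; have := val_add_ge hq hr; rewrite vpq.
have not_d_le_y : ~ ogle O d y by move/(ogle_anti hyd).
have ge_y : ext_le O (Some y) (v (p - q)).
  by apply: val_add_ge; rewrite ?valN ?vp ?vq //= ogle_refl.
case vr: (v (p - q)) ge_y => [z|] /= hyz; last first.
  by case: not_d_le_y; apply: sum_le_y; rewrite ?vq ?vr /= ?ogle_refl.
case/orP: (ogle_total O d z) => hdz.
  by case: not_d_le_y; apply: sum_le_y; rewrite ?vq ?vr /= ?ogle_refl.
have hzy : ogle O z y by apply: sum_le_y; rewrite ?vq ?vr /= ?ogle_refl.
by rewrite (ogle_anti hyz hzy).
Qed.

End KrullValuation.

Section ValueGroup.
Variables (L : fieldType) (G : zmodType) (O : ordered_group G).
Variables (mu : {poly L} -> option G) (hmu : krull_valuation O mu).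

Notation vg := (in_value_group mu).

Lemma val_const (c : L) :
  c != 0 -> exists z, mu c%:P = Some z /\ mu c^-1%:P = Some (- z).
Proof.
by move=> c0; apply: (val_inverse_pair hmu); rewrite -polyCM mulfV.
Qed.

Lemma vg_none : ~ vg None.
Proof. by move=> [c [/val_const [z [-> _]]]]. Qed.

Lemma vg0 : vg (Some 0).
Proof. by exists 1; rewrite oner_neq0 (val1 hmu). Qed.

Lemma vg_add (x y : G) : vg (Some x) -> vg (Some y) -> vg (Some (x + y)).
Proof.
move=> [c [c0 hx]] [e [e0 hy]]; exists (c * e).
by rewrite mulf_neq0 // polyCM (valM hmu) hx hy.
Qed.

Lemma vg_opp (x : G) : vg (Some x) -> vg (Some (- x)).
Proof.
move=> [c [c0 hx]]; exists c^-1; rewrite invr_eq0 c0; split => //.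
have [z [hz ->]] := val_const c0.
by move: hx; rewrite hz => -[->].
Qed.

Lemma vg_addr (x w : G) : vg (Some w) -> vg (Some (x + w)) <-> vg (Some x).
Proof.
move=> hw; split => [hxw|hx]; last exact: vg_add.
by have := vg_add hxw (vg_opp hw); rewrite addrK.
Qed.

Lemma vg_mulrn (x : G) (k : nat) : vg (Some x) -> vg (Some (x *+ k)).
Proof.
move=> hx; elim: k => [|k IH]; first by rewrite mulr0n; apply: vg0.
by rewrite mulrS; apply: vg_add.
Qed.

End ValueGroup.

Section ClosedField.
Variables (L : closedFieldType) (G : zmodType) (O : ordered_group G).
Variables (mu : {poly L} -> option G) (hmu : krull_valuation O mu).

Notation vg := (in_value_group mu).

(* Over an algebraically closed field the value group is divisible; as it is
   torsion-free, x lies in it as soon as a positive multiple of x does. *)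
Lemma vg_mulrn_iff (x : G) (k : nat) :
  (0 < k)%N -> vg (Some (x *+ k)) <-> vg (Some x).
Proof.
move=> k_gt0; split; last exact: (vg_mulrn hmu).
move=> [c [c0 hc]].
have [r] : exists r, root ('X^k - c%:P) r.
  by apply/closed_rootP; rewrite size_XnsubC // eqSS -lt0n.
rewrite rootE !hornerE subr_eq0 => /eqP rk.
have r0 : r != 0 by apply: contraNneq c0 => r0; rewrite -rk r0 expr0n eqn0Ngt k_gt0.
have [m [hm _]] := val_const hmu r0.
exists r; split => //; rewrite hm; congr Some.
have := valX hmu k hm; rewrite -polyC_exp rk hc => -[].
by move/esym; exact: (@mulrn_inj G O m x k k_gt0).
Qed.

End ClosedField.

Section RootValues.
Variables (L : fieldType) (G : zmodType) (O : ordered_group G).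
Variables (mu : {poly L} -> option G) (hmu : krull_valuation O mu).
Variables (a : L) (dl : G) (mu_a : mu ('X - a%:P) = Some dl).

Notation vg := (in_value_group mu).

Definition delta_or_vg (e : option G) : Prop :=
  e = Some dl \/ exists y, e = Some y /\ vg (Some y).

(* A linear factor valued at most mu(x - a) is valued dl or as a constant:
   if mu(x - c) < mu(x - a) then mu(x - c) = mu((x - c) - (x - a)) = mu(a - c). *)
Lemma linear_factor_val (c : L) :
  ext_le O (mu ('X - c%:P)) (Some dl) -> delta_or_vg (mu ('X - c%:P)).
Proof.
case ec: (mu ('X - c%:P)) => [y|] //= hyd.
have [->|hne] := eqVneq y dl; [by left | right; exists y; split => //].
have hac : mu (a - c)%:P = Some y.
  rewrite -(val_sub_lt hmu ec mu_a hyd (elimN eqP hne)).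
  by congr mu; rewrite polyCB; ring.
exists (a - c); split => //.
by apply/eqP => ac0; move: hac; rewrite ac0 polyC0; case: hmu => ->.
Qed.

Lemma prod_linear_factors_val (s : seq L) :
  (forall c, c \in s -> delta_or_vg (mu ('X - c%:P))) ->
  exists k w, [/\ vg (Some w),
    mu (\prod_(c <- s) ('X - c%:P)) = Some (dl *+ k + w) & a \in s -> (0 < k)%N].
Proof.
elim: s => [|c s IH] hs.
  exists 0%N, 0; rewrite big_nil mulr0n addr0 (val1 hmu).
  by split; first exact: vg0 hmu.
have [k [w [hw hp hk]]] : exists k w, [/\ vg (Some w),
    mu (\prod_(z <- s) ('X - z%:P)) = Some (dl *+ k + w) & a \in s -> (0 < k)%N].
  by apply: IH => e he; apply: hs; rewrite inE he orbT.
rewrite big_cons (valM hmu) hp.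
have [hc|hc] := eqVneq (mu ('X - c%:P)) (Some dl).
  by exists k.+1, w; rewrite hc /= mulrS addrA.
have [hdl|[y [hy hvy]]] := hs c (mem_head _ _); first by rewrite hdl eqxx in hc.
exists k, (y + w); split; first exact: (vg_add hmu hvy hw).
  by rewrite hy /= addrCA.
rewrite inE => /orP [/eqP hac|]; last exact: hk.
by rewrite -hac mu_a eqxx in hc.
Qed.

End RootValues.

Section OptimizingRoot.
Variables (L : closedFieldType) (G : zmodType) (O : ordered_group G).
Variables (mu : {poly L} -> option G) (hmu : krull_valuation O mu).

Notation vg := (in_value_group mu).

Lemma val_root_inf (g : {poly L}) (a : L) :
  root g a -> mu ('X - a%:P) = None -> mu g = None.
Proof.
by move=> /factor_theorem [q ->] mu_a; rewrite (valM hmu) mu_a; case: (mu q).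
Qed.

Lemma val_poly_optimizing_root (g : {poly L}) (a : L) (dl : G) :
  g != 0 -> root g a -> mu ('X - a%:P) = Some dl ->
  (forall c, root g c -> ext_le O (mu ('X - c%:P)) (Some dl)) ->
  exists k w, [/\ (0 < k)%N, vg (Some w) & mu g = Some (dl *+ k + w)].
Proof.
move=> g0 ga mu_a hmax.
have lc0 : lead_coef g != 0 by rewrite lead_coef_eq0.
have [r hr] := closed_field_poly_normal g.
have root_r c : root g c = (c \in r) by rewrite {1}hr rootZ // root_prod_XsubC.
have [k [w [hw hp hk]]] := prod_linear_factors_val hmu mu_a (s := r)
  (fun c hc => linear_factor_val hmu mu_a (hmax c (etrans (root_r c) hc))).
have [lam [hlam _]] := val_const hmu lc0.
exists k, (lam + w); split; first by apply: hk; rewrite -root_r.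
  by apply: (vg_add hmu) hw; exists (lead_coef g).
by rewrite hr -mul_polyC (valM hmu) hlam hp /= addrCA.
Qed.

End OptimizingRoot.

Theorem lemma3p5
  (K : fieldType) (L : closedFieldType) (iota : {rmorphism K -> L})
  (L_alg : forall z : L, exists p : {poly K}, p != 0 /\ root (map_poly iota p) z)
  (G : zmodType) (O : ordered_group G)
  (nu : {poly K} -> option G) (mu : {poly L} -> option G)
  (hnu : krull_valuation O nu) (hmu : krull_valuation O mu)
  (hext : forall p : {poly K}, mu (map_poly iota p) = nu p)
  (f : {poly K}) (hf : (1 < size f)%N)
  (d : option G) (hd : is_delta iota O mu f d)
  (a : L) (ha : optimizing_root iota O mu f a) :
  in_value_group mu (nu f) <-> in_value_group mu d.
Proof.
rewrite -hext; set g := map_poly iota f; case: ha => ga hmax.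
have -> : d = mu ('X - a%:P).
  by case: hd => [[c [gc <-]] hd]; exact: ext_le_anti (hmax c gc) (hd a ga).
case mu_a: (mu ('X - a%:P)) hmax => [dl|] hmax; last first.
  by rewrite (val_root_inf hmu ga mu_a); split => /(vg_none hmu).
have g0 : g != 0 by rewrite -size_poly_gt0 size_map_poly (ltn_trans _ hf).
have [k [w [k_gt0 hw ->]]] := val_poly_optimizing_root hmu g0 ga mu_a hmax.
by rewrite (vg_addr hmu _ hw) (vg_mulrn_iff hmu _ k_gt0).
Qed.
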